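(* Let $n\ge 3$ and let $(u,v)$ be an MAB pair of binary words with $|u|=|v|=n$, $i=\mathrm{lsb}(u,v)$, $j=\mathrm{lsb}(v,u)$ and $i+j>n$. Write $u=\alpha\gamma\beta$ and $v=\beta'\gamma'\alpha'$ with $|\alpha|=|\alpha'|=n-i$, $|\gamma|=|\gamma'|=i+j-n$ and $|\beta|=|\beta'|=n-j$ (so that $\mathrm{sb}(u,v)=(\gamma\beta,\beta'\gamma')$ and $\mathrm{sb}(v,u)=(\gamma'\alpha',\alpha\gamma)$). Then $\big||\alpha|_c-|\alpha'|_c\big|=1$ for all $c\in\{a,b\}$ if and only if $i+j-n=1$.
   Context: Let $\Sigma=\{a,b\}$. For a word $w$ and a letter $c$, $|w|_c$ denotes the number of occurrences of $c$ in $w$. Two words $x,y$ are abelian equivalent, written $x\sim_{\mathrm{abl}}y$, if $|x|_c=|y|_c$ for all $c\in\Sigma$. For words $u,v$: a pair $(x,y)$ is an internal abelian-border of $(u,v)$ if $x$ is a nonempty proper suffix of $u$, $y$ is a proper prefix of $v$, and $x\sim_{\mathrm{abl}}y$; it is an external abelian-border of $(u,v)$ if $x$ is a nonempty proper prefix of $u$, $y$ is a proper suffix of $v$, and $x\sim_{\mathrm{abl}}y$. The pair $(u,v)$ is mutually abelian-bordered (MAB) if it has both an internal and an external abelian-border, and mutually abelian-unbordered (MAU) if it has neither. If $(u,v)$ has an internal abelian-border, $\mathrm{sb}(u,v)$ denotes its internal abelian-border $(x,y)$ of minimal length and $\mathrm{lsb}(u,v)=|x|$ is that minimal length. *)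

From HB Require Import structures.
From mathcomp Require Import all_boot all_order all_algebra.
Set Implicit Arguments. Unset Strict Implicit. Unset Printing Implicit Defensive.

Inductive letter := La | Lb.
Definition letter_to_bool (c : letter) : bool := if c is La then true else false.
Definition bool_to_letter (x : bool) : letter := if x then La else Lb.
Lemma letter_boolK : cancel letter_to_bool bool_to_letter. Proof. by case. Qed.
HB.instance Definition _ := Equality.copy letter (can_type letter_boolK).
HB.instance Definition _ := Finite.copy letter (can_type letter_boolK).

Definition word := seq letter.

Definition occ (w : word) (c : letter) : nat := count_mem c w.

Definition abel_eq (x y : word) : bool := [forall c : letter, occ x c == occ y c].

Definition is_int_border (u v x y : word) : bool :=
  [&& 0 < size x, size x < size u, suffix x u,
      size y < size v, prefix y v & abel_eq x y].

Definition is_ext_border (u v x y : word) : bool :=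
  [&& 0 < size x, size x < size u, prefix x u,
      size y < size v, suffix y v & abel_eq x y].

Definition has_int_border (u v : word) : Prop :=
  exists x y, is_int_border u v x y.
Definition has_ext_border (u v : word) : Prop :=
  exists x y, is_ext_border u v x y.

Definition MAB (u v : word) : Prop := has_int_border u v /\ has_ext_border u v.

Definition is_lsb (u v : word) (i : nat) : Prop :=
  (exists x y, is_int_border u v x y /\ size x = i) /\
  (forall x y, is_int_border u v x y -> i <= size x).

From mathcomp Require Import all_boot all_order all_algebra.
From mathcomp Require Import zify.
Set Implicit Arguments. Unset Strict Implicit.

(* Write D = |u|_a - |v|_a and d m = |suffix_m v|_a - |prefix_m u|_a.  Then d j = 0
   and d m <> 0 for 0 < m < j by minimality of j.  Since d m + D is the
   corresponding defect of (u, v) at length n - m, minimality of i gives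
   d (n - i) = -D and d m <> -D for n - i < m < n.  As d moves by at most 1 per
   step, a walk from -D = +-1 to 0 avoiding both values in between has length
   at most 1, so i + j <= n + 1 when |D| = 1; and sb(u, v) shows
   D = |alpha|_a - |alpha'|_a.  Conversely, if gamma = [g] and gamma' = [g'] then
   g <> g' (else (beta, beta') is a shorter internal border), and
   alpha g ~ g' alpha' forces ||alpha|_c - |alpha'|_c| = 1 for both letters. *)

Lemma occ_cat (x y : word) c : occ (x ++ y) c = occ x c + occ y c.
Proof. exact: count_cat. Qed.

Lemma occ_take_drop (w : word) m c : occ (take m w) c + occ (drop m w) c = occ w c.
Proof. by rewrite -occ_cat cat_take_drop. Qed.

Lemma occ_suffix (w : word) m c : occ (drop (size w - m) w) c = occ (take m (rev w)) c.
Proof. by rewrite take_rev /occ count_rev. Qed.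

Lemma occ_take_succ (w : word) m c :
  occ (take m w) c <= occ (take m.+1 w) c <= (occ (take m w) c).+1.
Proof.
case: (ltnP m (size w)) => [lt_m_w | le_w_m]; last by rewrite !take_oversize ?leqnSn //; lia.
by rewrite (take_nth La lt_m_w) -cats1 occ_cat /occ /=; case: (_ == c) => /=; lia.
Qed.

Lemma occ_La_Lb (w : word) : occ w La + occ w Lb = size w.
Proof. by elim: w => [|[] w IH] //=; rewrite /occ /= in IH *; lia. Qed.

Lemma abel_eqP (x y : word) : reflect (forall c, occ x c = occ y c) (abel_eq x y).
Proof. by apply: (iffP forallP) => H c; apply/eqP. Qed.

Lemma abel_eq_size (x y : word) : abel_eq x y -> size x = size y.
Proof. by move/abel_eqP=> H; rewrite -!occ_La_Lb !H. Qed.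

Lemma abel_eqE (x y : word) : size x = size y -> abel_eq x y = (occ x La == occ y La).
Proof.
move=> Sxy; apply/abel_eqP/eqP => [-> // | Ha [] //].
by have := occ_La_Lb x; have := occ_La_Lb y; lia.
Qed.

Definition border_defect (u v : word) (m : nat) : int :=
  ((occ (drop (size u - m) u) La)%:Z - (occ (take m v) La)%:Z)%R.

Lemma border_defect_step (u v : word) m :
  (`|border_defect u v m.+1 - border_defect u v m| <= 1)%R.
Proof.
rewrite /border_defect !occ_suffix.
have := occ_take_succ (rev u) m La; have := occ_take_succ v m La; lia.
Qed.

Section Borders.
Variables (u v : word) (n : nat).
Hypotheses (Hu : size u = n) (Hv : size v = n).

Lemma border_defect_eq0 m : m <= n ->
  (border_defect u v m == 0)%R = abel_eq (drop (n - m) u) (take m v).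
Proof.
move=> le_m_n; rewrite abel_eqE; last by rewrite size_drop size_takel; lia.
by rewrite /border_defect Hu; apply/eqP/eqP; lia.
Qed.

Lemma border_defect_compl m : m <= n ->
  (border_defect u v m - border_defect v u (n - m) = (occ u La)%:Z - (occ v La)%:Z)%R.
Proof.
move=> le_m_n; rewrite /border_defect Hu Hv subKn //.
have := occ_take_drop u (n - m) La; have := occ_take_drop v m La; lia.
Qed.

Lemma int_borderP x y : is_int_border u v x y ->
  [/\ 0 < size x < n, x = drop (n - size x) u, y = take (size x) v & abel_eq x y].
Proof.
rewrite /is_int_border suffixE prefixE.
case/and5P=> x_gt0 x_lt_u /eqP Dx _ /andP[/eqP Dy abel_xy].
have Sxy := abel_eq_size abel_xy.
by split; [rewrite x_gt0 -Hu | rewrite -Hu Dx | rewrite Sxy Dy |].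
Qed.

Lemma int_border_drop_take m : 0 < m < n ->
  border_defect u v m = 0%R -> is_int_border u v (drop (n - m) u) (take m v).
Proof.
move=> /andP[m_gt0 m_lt_n] /eqP; have le_m_n := ltnW m_lt_n.
rewrite border_defect_eq0 // => abel_m.
by rewrite /is_int_border suffix_drop prefix_take abel_m size_drop size_takel ?Hu ?Hv
  ?subKn ?m_gt0 ?m_lt_n.
Qed.

Lemma lsb_border i : is_lsb u v i -> 0 < i < n /\ border_defect u v i = 0%R.
Proof.
case=> [[x [y [/int_borderP[size_x Dx Dy abel_xy] <-]]] _]; split=> //.
by apply/eqP; rewrite border_defect_eq0 -?Dx -?Dy // ltnW; case/andP: size_x.
Qed.

Lemma lsb_min i m : is_lsb u v i -> 0 < m < i -> (border_defect u v m != 0)%R.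
Proof.
case=> [[x [y [/int_borderP[/andP[_ i_lt_n] _ _ _] <-]]] min_i] /andP[m_gt0 m_lt_i].
have m_lt_n : m < n by apply: ltn_trans i_lt_n.
have range_m : 0 < m < n by rewrite m_gt0.
apply/eqP => /(int_border_drop_take range_m)/min_i.
by rewrite size_drop Hu subKn ?(ltnW m_lt_n) // leqNgt m_lt_i.
Qed.

End Borders.

Lemma walk_from1_short (g : nat -> int) k :
  g 0 = 1%R -> g k = 0%R ->
  (forall t, t < k -> (`|g t.+1 - g t| <= 1)%R) ->
  (forall t, 0 < t < k -> g t != 0%R /\ g t != 1%R) -> k <= 1.
Proof.
move=> g0 gk step avoid; rewrite leqNgt; apply/negP => k_gt1.
have far t : 0 < t < k -> (2 <= g t)%R.
  elim: t => [//|t IH] /andP[_ t_lt_k].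
  have [/eqP ne0 /eqP ne1] := avoid t.+1 t_lt_k.
  have := step t (ltnW t_lt_k).
  case: t IH t_lt_k ne0 ne1 => [|t] IH t_lt_k ne0 ne1; first by rewrite g0; lia.
  by have := IH (ltnW t_lt_k); lia.
have k_pos : 0 < k.-1 < k by lia.
have := far _ k_pos; have := step _ (proj2 (andP k_pos)).
by rewrite prednK ?gk; lia.
Qed.

Lemma unit_walk_short (h : nat -> int) k :
  (`|h 0%N| = 1)%R -> h k = 0%R ->
  (forall t, t < k -> (`|h t.+1 - h t| <= 1)%R) ->
  (forall t, 0 < t < k -> h t != 0%R /\ h t != h 0) -> k <= 1.
Proof.
move=> h0 hk step avoid.
have [e1|em1] : h 0 = 1%R \/ h 0 = (-1)%R by lia.
  by apply: walk_from1_short hk step _ => // t /avoid; rewrite e1.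
by apply: (@walk_from1_short (fun t => - h t)%R) => /= [||t /step|t /avoid]; lia.
Qed.

Lemma lsb_sum_le (u v : word) n i j :
  size u = n -> size v = n -> is_lsb u v i -> is_lsb v u j ->
  `|occ u La - occ v La|%N = 1 -> i + j <= n.+1.
Proof.
move=> Hu Hv Li Lj diff1.
have [/andP[i_gt0 i_lt_n] bd_i] := lsb_border Hu Hv Li.
have [/andP[j_gt0 j_lt_n] bd_j] := lsb_border Hv Hu Lj.
have [|n_lt_ij] := leqP (i + j) n; first lia.
pose D := ((occ u La)%:Z - (occ v La)%:Z)%R.
have bd_vu m : m <= n -> border_defect v u m = (border_defect u v (n - m) - D)%R.
  by move=> le_m_n; have := border_defect_compl Hu Hv (leq_subr m n); rewrite subKn //; lia.
suff : i + j - n <= 1 by lia.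
apply: (@unit_walk_short (fun t => border_defect v u (n - i + t))) => /=.
- rewrite addn0 bd_vu ?leq_subr // subKn ?bd_i /D; [lia | exact: ltnW].
- by rewrite (_ : n - i + _ = j) //; lia.
- by move=> t _; rewrite addnS; apply: border_defect_step.
move=> t /andP[t_gt0 t_lt_k]; split.
  by apply: (lsb_min Hv Hu Lj); lia.
have := lsb_min Hu Hv Li (m := n - (n - i + t)).
rewrite addn0 !bd_vu ?leq_subr //; last lia.
rewrite subKn ?bd_i; [lia | exact: ltnW].
Qed.

Lemma abel_eq_distinct_ends (x y : word) g g' :
  g != g' -> abel_eq (g' :: y) (x ++ [:: g]) -> forall c, `|occ x c - occ y c|%N = 1.
Proof.
move=> ne_g abel_xy c; move/abel_eqP/(_ c): abel_xy; rewrite occ_cat /occ /=.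
by case: g g' c ne_g => [] [] [] //= _; lia.
Qed.

Theorem mainTheorem4 (n : nat) (u v : word) (i j : nat)
    (alpha gamma beta alpha' gamma' beta' : word) :
  3 <= n ->
  MAB u v ->
  size u = n -> size v = n ->
  is_lsb u v i -> is_lsb v u j ->
  n < i + j ->
  u = alpha ++ gamma ++ beta ->
  v = beta' ++ gamma' ++ alpha' ->
  size alpha = n - i -> size alpha' = n - i ->
  size gamma = i + j - n -> size gamma' = i + j - n ->
  size beta = n - j -> size beta' = n - j ->
  (forall c : letter, `|occ alpha c - occ alpha' c|%N = 1)
  <-> i + j - n = 1.
Proof.
move=> _ _ Hu Hv Li Lj n_lt_ij Du Dv Sa _ Sg Sg' _ Sb'.
have [/andP[_ i_lt_n] bd_i] := lsb_border Hu Hv Li.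
have [/andP[_ j_lt_n] bd_j] := lsb_border Hv Hu Lj.
have abel_i : abel_eq (gamma ++ beta) (beta' ++ gamma').
  move/eqP: bd_i; rewrite (border_defect_eq0 Hu Hv (ltnW i_lt_n)) Du Dv drop_size_cat //.
  by rewrite catA take_size_cat // size_cat; lia.
have abel_j : abel_eq (gamma' ++ alpha') (alpha ++ gamma).
  move/eqP: bd_j; rewrite (border_defect_eq0 Hv Hu (ltnW j_lt_n)) Du Dv drop_size_cat //.
  by rewrite catA take_size_cat // size_cat; lia.
split=> [dist1 | k1].
  have := lsb_sum_le Hu Hv Li Lj; have := dist1 La.
  move/abel_eqP/(_ La): abel_i; rewrite Du Dv !occ_cat; lia.
rewrite k1 in Sg Sg'.
case: gamma Sg Du abel_i abel_j => [|g []] // _ Du abel_i abel_j.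
case: gamma' Sg' Dv abel_i abel_j => [|g' []] // _ Dv abel_i abel_j.
apply: abel_eq_distinct_ends abel_j; apply/eqP => eq_g; subst g'.
have := lsb_min Hu Hv Li (m := n - j).
rewrite /border_defect Hu subKn ?(ltnW j_lt_n) // Du Dv catA drop_size_cat; last first.
  by rewrite size_cat Sa /=; lia.
rewrite take_size_cat //; move/abel_eqP/(_ La): abel_i; rewrite !occ_cat; lia.
Qed.
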